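(* Let $A$ be a non-empty set and $N$ a submagma of the free magma $\mathbb{M}_A$. Then $N$ is closed if and only if $\mathcal{G}(N)\subseteq A$. In particular, the closed submagmas of $\mathbb{M}_A$ are exactly the submagmas $\mathbb{M}_B=\langle B\rangle$ with $B\subseteq A$.
   Context: $\mathbb{M}_A$ is the free magma on $A$ (non-associative words over $A$, with $x+y=(x,y)$); for $B\subseteq A$, $\mathbb{M}_B=\langle B\rangle$ is the submagma generated by $B$ (empty if $B=\emptyset$). A subset $X$ of a magma $M$ is closed if $x+y\in X$ implies $x,y\in X$. For a submagma $N\subseteq\mathbb{M}_A$, $\mathcal{G}(N)$ is the unique minimal generating set of $N$, namely the set of elements of $N$ that cannot be written as $x+y$ with $x,y\in N$ ($\mathcal{G}(\emptyset)=\emptyset$). *)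

Inductive mag (A : Type) : Type :=
| leaf : A -> mag A
| node : mag A -> mag A -> mag A.
Arguments leaf {A} _.
Arguments node {A} _ _.

Definition is_submagma {A : Type} (N : mag A -> Prop) : Prop :=
  forall x y, N x -> N y -> N (node x y).

Definition closed_set {A : Type} (X : mag A -> Prop) : Prop :=
  forall x y, X (node x y) -> X x /\ X y.

Definition min_gen {A : Type} (N : mag A -> Prop) : mag A -> Prop :=
  fun z => N z /\ ~ (exists x y, N x /\ N y /\ z = node x y).

Inductive gen_by {A : Type} (B : A -> Prop) : mag A -> Prop :=
| gen_leaf : forall a, B a -> gen_by B (leaf a)
| gen_node : forall x y, gen_by B x -> gen_by B y -> gen_by B (node x y).

(* A node x + y of N is decomposable inside N exactly when x and y both lie in
   N, so N is closed iff no node is a minimal generator.  A closed submagma is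
   then determined by its leaves B: by induction on words, x + y lies in N iff
   x and y do, which is also how membership in <B> unfolds. *)

From Stdlib Require Import Classical.

Section ClosedSubmagma.

Context {A : Type}.
Implicit Types (N M : mag A -> Prop) (B : A -> Prop).

Lemma closed_min_gen_leaf N z :
  closed_set N -> min_gen N z -> exists a, z = leaf a.
Proof.
  intros Hclosed [Nz Hindec]. destruct z as [a | x y].
  - exists a. reflexivity.
  - exfalso. apply Hindec. destruct (Hclosed x y Nz) as [Nx Ny].
    exists x, y. auto.
Qed.

Lemma min_gen_leaf_closed N :
  (forall z, min_gen N z -> exists a, z = leaf a) -> closed_set N.
Proof.
  intros Hleaf x y Nxy.
  destruct (classic (N x /\ N y)) as [Nxy_parts | Hnot]; [exact Nxy_parts |].
  assert (Hmin : min_gen N (node x y)).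
  { split; [exact Nxy |].
    intros (x' & y' & Nx' & Ny' & Heq). injection Heq as -> ->. auto. }
  destruct (Hleaf _ Hmin) as [a Ha]. discriminate.
Qed.

Lemma gen_by_closed B : closed_set (gen_by B).
Proof. intros x y Hxy. inversion Hxy; subst. auto. Qed.

Lemma closed_set_ext N M :
  (forall z, N z <-> M z) -> closed_set M -> closed_set N.
Proof. intros HNM HM x y Nxy. rewrite !HNM in *. auto. Qed.

Lemma closed_submagma_gen_by_leaves N :
  is_submagma N -> closed_set N ->
  forall z, N z <-> gen_by (fun a => N (leaf a)) z.
Proof.
  intros Hsub Hclosed z.
  induction z as [a | x IHx y IHy]; split; intro Hz.
  - constructor. exact Hz.
  - inversion Hz. assumption.
  - destruct (Hclosed x y Hz). constructor; tauto.
  - inversion Hz; subst. apply Hsub; tauto.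
Qed.

End ClosedSubmagma.

Theorem lemma6p2 (A : Type) (Ane : inhabited A) (N : mag A -> Prop)
  (HN : is_submagma N) :
  (closed_set N <-> (forall z, min_gen N z -> exists a : A, z = leaf a))
  /\ (closed_set N <-> exists B : A -> Prop, forall z, N z <-> gen_by B z).
Proof.
  split; split.
  - intros Hclosed z. apply closed_min_gen_leaf, Hclosed.
  - apply min_gen_leaf_closed.
  - intros Hclosed. exists (fun a => N (leaf a)).
    apply closed_submagma_gen_by_leaves; assumption.
  - intros [B HB]. apply closed_set_ext with (gen_by B); [exact HB | apply gen_by_closed].
Qed.
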